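(* If a collection $\mathcal Q$ of probability measures on $\{0,1\}^{\mathbb N}$ is separable in its means, then $\mathcal Q$ is UME-learnable.
   Context: $\{0,1\}^{\mathbb N}$ carries the product $\sigma$-algebra. For a probability measure $\mu$ on $\{0,1\}^{\mathbb N}$, $\mathrm{Mean}(\mu)\in[0,1]^{\mathbb N}$ is the vector whose $j$-th coordinate is $\mathbb E[X_j]$ for $X\sim\mu$; $\mathrm{Mean}(\mathcal Q)=\{\mathrm{Mean}(\mu):\mu\in\mathcal Q\}$. For $\varepsilon>0$, a countable $\varepsilon$-cover of $\mathrm{Mean}(\mathcal Q)$ is a countable set $C\subset[0,1]^{\mathbb N}$ such that every $q\in\mathrm{Mean}(\mathcal Q)$ has some $p\in C$ with $\|q-p\|_\infty<\varepsilon$. $\mathcal Q$ is separable in its means if for every $\varepsilon>0$ a countable $\varepsilon$-cover of $\mathrm{Mean}(\mathcal Q)$ exists, and non-separable in its means otherwise. $\mathcal Q$ is UME-learnable if there exist (measurable) estimators $\mathcal A_n:(\{0,1\}^{\mathbb N})^n\to[0,1]^{\mathbb N}$, $n\in\mathbb N$, such that for every $\mu\in\mathcal Q$, $\mathbb E_{S\sim\mu^n}\|\mathcal A_n(S)-\mathrm{Mean}(\mu)\|_\infty\to0$ as $n\to\infty$, where $S$ consists of $n$ i.i.d. draws from $\mu$. *)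

From HB Require Import structures.
From mathcomp Require Import all_boot all_order all_algebra.
From mathcomp Require Import all_classical all_reals all_analysis.
Set Implicit Arguments. Unset Strict Implicit. Unset Printing Implicit Defensive.
Import Order.TTheory GRing.Theory Num.Theory.
Local Open Scope classical_set_scope.
Local Open Scope ring_scope.

Definition seq_space (T : Type) := nat -> T.

Definition seq_space_display : measure_display -> measure_display.
Proof. exact. Qed.

Section seq_space_measurable.
Context {d} {T : measurableType d}.

HB.instance Definition _ := Pointed.on (seq_space T).

Definition seq_space_measurable : set (set (seq_space T)) :=
  <<s \bigcup_(i in [set: nat])
        preimage_set_system [set: seq_space T] (fun x : seq_space T => x i)
          measurable >>.

Let ss0 : seq_space_measurable set0.
Proof. exact: sigma_algebra0. Qed.
Let ssC A : seq_space_measurable A -> seq_space_measurable (~` A).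
Proof. exact: sigma_algebraC. Qed.
Let ssU (F : _^nat) : (forall i, seq_space_measurable (F i)) ->
  seq_space_measurable (\bigcup_i (F i)).
Proof. exact: sigma_algebra_bigcup. Qed.

HB.instance Definition _ := @isMeasurable.Build (seq_space_display d)
  (seq_space T) seq_space_measurable ss0 ssC ssU.
End seq_space_measurable.

Definition Cantor := seq_space bool.

Section defs.
Context {R : realType}.
Local Open Scope ereal_scope.

Definition Mean (mu : probability Cantor R) : nat -> R :=
  fun j => fine (\int[mu]_x ((x j)%:R)%:E).

Definition supdist (q p : nat -> R) : \bar R :=
  ereal_sup [set (`|q j - p j|)%:E | j in [set: nat]].

Definition unit_cube : set (nat -> R) :=
  [set p | forall j, (0 <= p j <= 1)%R].

(* Expectation of a nonnegative function of an i.i.d. sample S ~ mu^n,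
   S = (x_1,...,x_n), defined as the iterated integral
   \int mu(dx_1) ... \int mu(dx_n) f(x_1,...,x_n)
   (= \int f d(mu^n) for measurable f >= 0, by Tonelli). *)
Fixpoint iid_expect (mu : probability Cantor R) (n : nat) :
    (n.-tuple Cantor -> \bar R) -> \bar R :=
  match n return (n.-tuple Cantor -> \bar R) -> \bar R with
  | 0 => fun f => f [tuple]
  | n'.+1 => fun f =>
      \int[mu]_x iid_expect mu (fun t : n'.-tuple Cantor => f [tuple of x :: t])
  end.

Definition separable_in_means (Q : set (probability Cantor R)) : Prop :=
  forall eps : R, (0 < eps)%R ->
    exists C : set (nat -> R),
      [/\ countable C, C `<=` unit_cube &
          forall mu, Q mu -> exists2 p, C p & supdist (Mean mu) p < eps%:E].

Definition UME_learnable (Q : set (probability Cantor R)) : Prop :=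
  exists A : forall n : nat, n.-tuple Cantor -> (nat -> R),
    [/\ (forall n, measurable_fun [set: n.-tuple Cantor]
                     (A n : n.-tuple Cantor -> seq_space R)),
        (forall n S, unit_cube (A n S)) &
        forall mu, Q mu ->
          (fun n => iid_expect mu (fun S => supdist (A n S) (Mean mu)))
            @ \oo --> 0].
End defs.

(* Separability yields countably many candidate mean vectors [cand i] in the
   unit cube, dense in sup-distance among the means of Q. For every pair of
   candidates fix a coordinate at which they differ by at least half their
   sup-distance. With n samples, score each of the first m + 1 candidates
   (m + 1 = floor (n^(1/4))) by its largest deviation from the empirical means
   on the (m + 1)^2 test coordinates between these candidates, and output a
   candidate of minimal score. If every tested empirical mean is eps-accurate
   and some candidate is eps-close to the true mean, the output is
   9 eps-close; otherwise the error is at most 1, and summing Chebyshev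
   bounds over the tests bounds the expected error by
   9 eps + (m + 1)^2 / (n eps^2), which tends to 9 eps. *)

From HB Require Import structures.
From mathcomp Require Import all_boot all_order all_algebra.
From mathcomp Require Import all_classical all_reals all_analysis.
From mathcomp Require Import measurable_realfun.
From mathcomp Require Import ring lra.
Set Implicit Arguments. Unset Strict Implicit. Unset Printing Implicit Defensive.
Import Order.TTheory GRing.Theory Num.Theory.
Local Open Scope classical_set_scope.
Local Open Scope ring_scope.

Section supdist.
Context {R : realType}.
Implicit Types p q r : nat -> R.

Lemma supdist_ub p q j : ((`|p j - q j|)%:E <= supdist p q)%E.
Proof. by apply: ereal_sup_ubound; exists j. Qed.

Lemma supdist_le p q (c : R) : (forall j, `|p j - q j| <= c) ->
  (supdist p q <= c%:E)%E.
Proof. by move=> pqc; apply: ge_ereal_sup => _ [j _ <-]; rewrite lee_fin. Qed.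

Lemma supdist_ge0 p q : (0 <= supdist p q)%E.
Proof. exact: le_trans (supdist_ub p q 0%N). Qed.

Lemma supdistC p q : supdist p q = supdist q p.
Proof.
by rewrite /supdist; congr ereal_sup; apply/seteqP; split=> _ [j _ <-];
  exists j => //; rewrite distrC.
Qed.

Lemma supdist_triangle p q r : (supdist p r <= supdist p q + supdist q r)%E.
Proof.
apply: ge_ereal_sup => _ [j _ <-].
apply: le_trans (leeD (supdist_ub p q j) (supdist_ub q r j)).
by rewrite -EFinD lee_fin -(subrKA (q j)) ler_normD.
Qed.

Lemma supdist_unit_cube_le1 p q : unit_cube p -> unit_cube q ->
  (supdist p q <= 1%:E)%E.
Proof.
move=> p01 q01; apply: supdist_le => j.
have /andP[? ?] := p01 j; have /andP[? ?] := q01 j.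
by rewrite ler_norml; apply/andP; split; lra.
Qed.

Lemma exists_coord_supdist_le2 p q : unit_cube p -> unit_cube q ->
  exists j, (supdist p q <= (2 * `|p j - q j|)%:E)%E.
Proof.
move=> p01 q01; have := supdist_ge0 p q; have := supdist_unit_cube_le1 p01 q01.
case Epq : (supdist p q) => [r| |] //= _; rewrite lee_fin => r0.
have [->|r_neq0] := eqVneq r 0; first by exists 0%N; rewrite lee_fin mulr_ge0.
have : ((r / 2)%:E < supdist p q)%E.
  by rewrite Epq lte_fin gtr_pMr ?invf_lt1 ?ltr1n// lt_neqAle eq_sym r_neq0.
move=> /ereal_sup_gt[_ [j _ <-]]; rewrite lte_fin => rj.
by exists j; rewrite lee_fin; lra.
Qed.

End supdist.

Lemma nonneg_cvge0 (R : realType) (u : nat -> \bar R) :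
  (forall n, (0 <= u n)%E) ->
  (forall e : R, 0 < e -> exists N, forall n, (N <= n)%N -> (u n <= e%:E)%E) ->
  u @ \oo --> 0%E.
Proof.
move=> u0 ule; apply/fine_cvgP; split.
  have [N uN] := ule 1 ltr01; exists N => // n /= Nn.
  by rewrite ge0_fin_numE// (le_lt_trans (uN n Nn)) ?ltry.
apply/cvgrPdist_le => e e0; have [N uN] := ule e e0.
exists N => // n /= Nn; rewrite sub0r normrN.
by move: (u0 n) (uN n Nn); case: (u n) => //= r; rewrite !lee_fin => r0 re;
  rewrite ger0_norm.
Qed.

Fixpoint iroot4 (n : nat) : nat :=
  if n is n'.+1 then
    let r := iroot4 n' in if ((r.+1) ^ 4 <= n)%N then r.+1 else r
  else 0%N.

Lemma iroot4_spec n : (iroot4 n ^ 4 <= n < (iroot4 n).+1 ^ 4)%N.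
Proof.
elim: n => [|n /andP[IH1 IH2]] //=; case: ifP => h; apply/andP; split.
- exact: h.
- by apply: leq_ltn_trans IH2 _; rewrite ltn_exp2r.
- exact: leqW.
- by move/negbT: h; rewrite -ltnNge.
Qed.

Lemma leq_iroot4 k n : (k ^ 4 <= n)%N -> (k <= iroot4 n)%N.
Proof.
move=> kn; have /andP[_ lt_n] := iroot4_spec n.
by rewrite -ltnS -(@ltn_exp2r _ _ 4)//; exact: leq_ltn_trans kn lt_n.
Qed.

Section argmin_upto.
Context {R : realType}.

Fixpoint argmin_upto (f : nat -> R) (k : nat) : nat :=
  if k is k'.+1 then
    let i := argmin_upto f k' in if f k < f i then k else i
  else 0%N.

Lemma argmin_upto_le f k : (argmin_upto f k <= k)%N.
Proof. by elim: k => //= k IH; case: ifP => // _; exact: leqW. Qed.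

Lemma argmin_upto_min f k l : (l <= k)%N -> f (argmin_upto f k) <= f l.
Proof.
elim: k l => [|k IH] l /=; first by rewrite leqn0 => /eqP->.
rewrite leq_eqVlt => /orP[/eqP->|lk]; case: ifPn => fk.
- by [].
- by rewrite leNgt.
- exact: le_trans (ltW fk) (IH _ lk).
- exact: IH.
Qed.

Lemma measurable_argmin_upto d (T : measurableType d) (f h : nat -> T -> R) k :
  (forall i, measurable_fun [set: T] (f i)) ->
  (forall i, measurable_fun [set: T] (h i)) ->
  measurable_fun [set: T] (fun x => h (argmin_upto (f^~ x) k) x).
Proof.
move=> mf; elim: k h => [|k IH] h mh //=.
rewrite (_ : (fun x => _) = fun x =>
    if f k.+1 x < f (argmin_upto (f^~ x) k) x
    then h k.+1 x else h (argmin_upto (f^~ x) k) x); last first.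
  by apply: funext => x; case: ifP.
apply: measurable_fun_ifT; [|exact: mh|exact: IH].
by apply: measurable_fun_ltr; [exact: mf|exact: IH].
Qed.

End argmin_upto.

Lemma measurable_bigmax (R : realType) d (T : measurableType d) (I : Type)
    (r : seq I) (f : I -> T -> R) :
  (forall i, measurable_fun [set: T] (f i)) ->
  measurable_fun [set: T] (fun x => \big[Num.max/0]_(i <- r) f i x).
Proof.
move=> mf; elim: r => [|i r IH].
  by under eq_fun do rewrite big_nil; exact: measurable_cst.
by under eq_fun do rewrite big_cons; exact: measurable_maxr.
Qed.

Section seq_space_measurability.
Context {d d'} {T : measurableType d} {T' : measurableType d'}.

Lemma measurable_seq_space_coord j :
  measurable_fun [set: seq_space T'] (fun x : seq_space T' => x j).
Proof. by move=> _ Y mY; apply: sub_sigma_algebra; exists j => //; exists Y. Qed.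

Lemma measurable_fun_seq_space (f : T -> seq_space T') :
  (forall j, measurable_fun [set: T] (fun x => f x j)) ->
  measurable_fun [set: T] f.
Proof.
move=> mf; apply: measurability; first by [].
move=> _ [_ [j _ [B mB <-]] <-].
have := mf j measurableT B mB; congr measurable.
by apply/seteqP; split => x /=; rewrite /preimage /=; tauto.
Qed.

End seq_space_measurability.

Section empirical_mean.
Context {R : realType}.

Definition bit (j : nat) (x : Cantor) : R := (x j)%:R.

Lemma measurable_bit j : measurable_fun [set: Cantor] (bit j).
Proof.
apply: (measurableT_comp (f := fun b : bool => b%:R : R)).
  by move=> _ Y _.
exact: measurable_seq_space_coord.
Qed.

Definition empirical_mean n (S : n.-tuple Cantor) (j : nat) : R :=
  (\sum_(x <- S) bit j x) / n%:R.

Lemma measurable_empirical_mean n j :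
  measurable_fun [set: n.-tuple Cantor] (fun S => empirical_mean S j).
Proof.
apply: measurable_funM; last exact: measurable_cst.
under eq_fun do rewrite big_tuple.
apply: measurable_sum => k.
exact: measurableT_comp (measurable_bit j) (measurable_tnth k).
Qed.

Lemma sum_centered_bits n (S : n.-tuple Cantor) j (c : R) : (0 < n)%N ->
  \sum_(x <- S) (bit j x - c) = n%:R * (empirical_mean S j - c).
Proof.
move=> n0; rewrite big_split /= sumrN big_const_seq count_predT size_tuple.
rewrite iter_addr_0 /empirical_mean mulrBr mulrCA divff ?pnatr_eq0 -?lt0n//.
by rewrite mulr1 mulr_natl.
Qed.

End empirical_mean.

Section min_score_estimate.
Context {R : realType}.
Variables (cand : nat -> nat -> R) (test : nat -> nat -> nat).

Definition test_coord m (ab : 'I_m.+1 * 'I_m.+1) : nat := test ab.1 ab.2.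

Definition score m {n} (S : n.-tuple Cantor) (i : nat) : R :=
  \big[Num.max/0]_(ab : 'I_m.+1 * 'I_m.+1)
    `|empirical_mean S (test_coord ab) - cand i (test_coord ab)|.

Definition min_score_estimate m {n} (S : n.-tuple Cantor) : nat -> R :=
  cand (argmin_upto (score m S) m).

Lemma measurable_min_score_estimate m n :
  measurable_fun [set: n.-tuple Cantor]
    (min_score_estimate m : n.-tuple Cantor -> seq_space R).
Proof.
apply: measurable_fun_seq_space => j.
apply: (measurable_argmin_upto (f := fun i S => score m S i)
                               (h := fun i _ => cand i j)) => i.
  apply: measurable_bigmax => ab; apply: measurableT_comp => //.
  by apply: measurable_funB; [exact: measurable_empirical_mean|exact: measurable_cst].
exact: measurable_cst.
Qed.

Hypothesis test_sep : forall a b,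
  (supdist (cand a) (cand b) <= (2 * `|cand a (test a b) - cand b (test a b)|)%:E)%E.

(* The winner and the [eps]-close candidate both score at most [2 eps], so
   they are [4 eps]-close at their test coordinate, hence [8 eps]-close. *)
Lemma supdist_min_score_estimate m n (S : n.-tuple Cantor) q i0 (eps : R) :
  (i0 <= m)%N -> (supdist (cand i0) q <= eps%:E)%E ->
  (forall ab : 'I_m.+1 * 'I_m.+1,
     `|empirical_mean S (test_coord ab) - q (test_coord ab)| <= eps) ->
  (supdist (min_score_estimate m S) q <= (9 * eps)%:E)%E.
Proof.
move=> i0m i0_close S_close.
have i0_close_at j : `|cand i0 j - q j| <= eps.
  by rewrite -lee_fin; apply: le_trans i0_close; exact: supdist_ub.
have eps0 : 0 <= eps by apply: le_trans (i0_close_at 0%N).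
set s := score m S; set w := argmin_upto s m.
have s_i0 : s i0 <= 2 * eps.
  apply: bigmax_le => [|ab _]; first by rewrite mulr_ge0.
  apply: le_trans (ler_distD (q (test_coord ab)) _ _) _.
  by rewrite mulr2n mulrDl mul1r lerD// distrC.
have s_w : s w <= 2 * eps by apply: le_trans (argmin_upto_min _ i0m) s_i0.
pose ab : 'I_m.+1 * 'I_m.+1 := (inord w, inord i0).
have abE : test_coord ab = test w i0.
  by rewrite /test_coord /= !inordK// ltnS ?argmin_upto_le.
have w_i0 : `|cand w (test w i0) - cand i0 (test w i0)| <= 4 * eps.
  rewrite -abE; apply: le_trans (ler_distD (empirical_mean S (test_coord ab)) _ _) _.
  have -> : 4 * eps = 2 * eps + 2 * eps by ring.
  rewrite distrC; apply: lerD.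
    exact: le_trans (le_bigmax _ _ ab) s_w.
  exact: le_trans (le_bigmax _ _ ab) s_i0.
apply: le_trans (supdist_triangle _ (cand i0) _) _.
have -> : 9 * eps = 2 * (4 * eps) + eps by ring.
rewrite EFinD leeD//; apply: le_trans (test_sep w i0) _.
by rewrite lee_fin ler_wpM2l.
Qed.

Hypothesis cand_unit_cube : forall i, unit_cube (cand i).

(* A failed test costs at most [1], the diameter of the unit cube, and is
   charged to its own Chebyshev-type square term. *)
Lemma supdist_min_score_estimate_le m n (S : n.-tuple Cantor) q i0 (eps : R) :
  (0 < n)%N -> 0 < eps -> unit_cube q ->
  (i0 <= m)%N -> (supdist (cand i0) q <= eps%:E)%E ->
  (supdist (min_score_estimate m S) q <=
   (9 * eps + \sum_(ab : 'I_m.+1 * 'I_m.+1) ((n%:R * eps) ^+ 2)^-1 *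
      (\sum_(x <- S) (bit (test_coord ab) x - q (test_coord ab))) ^+ 2)%:E)%E.
Proof.
move=> n0 eps0 q01 i0m i0_close.
pose term (ab : 'I_m.+1 * 'I_m.+1) := ((n%:R * eps) ^+ 2)^-1 *
  (\sum_(x <- S) (bit (test_coord ab) x - q (test_coord ab))) ^+ 2.
have term_ge0 ab : 0 <= term ab by rewrite mulr_ge0 ?invr_ge0 ?sqr_ge0.
have [S_close|] := pselect (forall ab : 'I_m.+1 * 'I_m.+1,
    `|empirical_mean S (test_coord ab) - q (test_coord ab)| <= eps).
  apply: le_trans (supdist_min_score_estimate i0m i0_close S_close) _.
  by rewrite lee_fin lerDl; apply: sumr_ge0 => ab _; exact: term_ge0.
move=> /existsNP[ab] /negP; rewrite -ltNge => S_far.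
apply: le_trans (supdist_unit_cube_le1 (cand_unit_cube _) q01) _.
set e := empirical_mean S _ - q _ in S_far.
have far_term : 1 <= term ab.
  have n_neq0 : n%:R != 0 :> R by rewrite pnatr_eq0 -lt0n.
  rewrite /term sum_centered_bits// -/e.
  have -> : ((n%:R * eps) ^+ 2)^-1 * (n%:R * e) ^+ 2 = (e / eps) ^+ 2.
    by field; rewrite n_neq0 gt_eqF.
  rewrite -real_normK ?num_real// exprn_ege1// normf_div (gtr0_norm eps0).
  by rewrite ler_pdivlMr// mul1r ltW.
have term_le_sum : term ab <= \sum_ab' term ab'.
  by rewrite (bigD1 ab)//= lerDl; apply: sumr_ge0 => ? _; exact: term_ge0.
rewrite lee_fin (le_trans far_term (le_trans term_le_sum _))//.
by rewrite lerDr mulr_ge0// ltW.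
Qed.

End min_score_estimate.

Section bounded_integrals.
Context d (T : measurableType d) (R : realType) (mu : probability T R).

Let mu_setT : ((mu : {measure set T -> \bar R}) [set: T] = 1)%E.
Proof. exact: probability_setT. Qed.

Lemma integral_cst_probability (c : R) : (\int[mu]_x c%:E = c%:E)%E.
Proof. by rewrite integral_cst// mu_setT mule1. Qed.

Lemma le_nonneg_integral (f g : T -> \bar R) :
  (forall x, 0 <= f x)%E -> (forall x, f x <= g x)%E ->
  (\int[mu]_x f x <= \int[mu]_x g x)%E.
Proof.
move=> f0 fg; have g0 x : (0 <= g x)%E := le_trans (f0 x) (fg x).
rewrite !ge0_integralTE//; apply: ereal_sup_le => _ [h /= hf <-].
by exists h => //= x; exact: le_trans (hf x) (fg x).
Qed.

Lemma bounded_integrable (h : T -> R) (M : R) : measurable_fun [set: T] h ->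
  (forall x, `|h x| <= M) -> mu.-integrable [set: T] (EFin \o h).
Proof.
move=> mh hM; apply: measurable_bounded_integrable => //.
  by rewrite mu_setT ltry.
exists M; split; first by rewrite num_real.
by move=> r Mr x _; exact: le_trans (hM x) (ltW Mr).
Qed.

Lemma fine_integral_unit_interval (h : T -> R) : measurable_fun [set: T] h ->
  (forall x, 0 <= h x <= 1) -> 0 <= fine (\int[mu]_x (h x)%:E)%E <= 1.
Proof.
move=> mh h01.
have h0 x : 0 <= h x by case/andP: (h01 x).
have h1 x : h x <= 1 by case/andP: (h01 x).
have : (\int[mu]_x (h x)%:E)%E \is a fin_num.
  by apply: integrable_fin_num => //; apply: (bounded_integrable mh) => x; rewrite ger0_norm.
have : (\int[mu]_x (h x)%:E <= \int[mu]_x 1)%E.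
  by apply: le_nonneg_integral => x; rewrite lee_fin.
have : (0 <= \int[mu]_x (h x)%:E)%E by apply: integral_ge0 => x _; rewrite lee_fin.
rewrite integral_cst_probability.
by case: (\int[mu]_x (h x)%:E)%E => //= r; rewrite !lee_fin => -> ->.
Qed.

Variables (I : finType) (g : I -> T -> R).
Hypothesis measurable_g : forall i, measurable_fun [set: T] (g i).
Hypothesis g_le1 : forall i x, `|g i x| <= 1.
Hypothesis g_centered : forall i, (\int[mu]_x (g i x)%:E = 0)%E.

Let integrable_g i : mu.-integrable [set: T] (EFin \o g i).
Proof. exact: bounded_integrable (measurable_g i) (g_le1 i). Qed.

Let integrable_g2 i : mu.-integrable [set: T] (EFin \o (fun x => g i x ^+ 2)).
Proof.
apply: (bounded_integrable (M := 1)); first exact: measurable_funX.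
by move=> x; rewrite normrX expr_le1.
Qed.

Let integrable_affine_quadratic (b e : R) i :
  mu.-integrable [set: T] (EFin \o (fun x => b * g i x + e * g i x ^+ 2)).
Proof.
apply: (bounded_integrable (M := `|b| + `|e|)).
  by apply: measurable_funD; apply: measurable_funM => //; exact: measurable_funX.
move=> x; apply: le_trans (ler_normD _ _) _; rewrite !normrM lerD//.
  by rewrite ler_piMr.
by rewrite ler_piMr// mulr_ile1.
Qed.

Lemma integral_centered_quadratic (K : R) (b e : I -> R) :
  (\int[mu]_x (K + \sum_i (b i * g i x + e i * g i x ^+ 2))%:E =
   (K + \sum_i e i * fine (\int[mu]_x (g i x ^+ 2)%:E))%:E)%E.
Proof.
under eq_integral do rewrite EFinD -sumEFin.
rewrite integralD//; last 2 first.
- exact: (bounded_integrable (M := `|K|)) (measurable_cst _) _.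
- apply: (@integrable_sum _ _ _ mu _ measurableT _ _ _
    (fun i x => (b i * g i x + e i * g i x ^+ 2)%:E)).
  by move=> i _; exact: integrable_affine_quadratic.
rewrite integral_cst_probability.
rewrite integral_sum//; last by move=> i; exact: integrable_affine_quadratic.
rewrite EFinD -sumEFin; congr (_ + _)%E; apply: eq_bigr => i _.
under eq_integral do rewrite EFinD (EFinM (b i)) (EFinM (e i)).
rewrite integralD//; last 2 first.
- exact: integrableZl (integrable_g i).
- exact: integrableZl (integrable_g2 i).
rewrite integralZl//; last exact: integrable_g i.
rewrite integralZl//; last exact: integrable_g2 i.
rewrite g_centered mule0 add0e EFinM fineK//.
exact: integrable_fin_num (integrable_g2 i).
Qed.

End bounded_integrals.

Section iid_expectation.
Context {R : realType} (mu : probability Cantor R).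
Local Open Scope ereal_scope.

Lemma iid_expect_ge0 n (f : n.-tuple Cantor -> \bar R) :
  (forall t, 0 <= f t) -> 0 <= iid_expect mu f.
Proof.
elim: n f => [|n IH] f f0 /=; first exact: f0.
by apply: integral_ge0 => x _; exact: IH.
Qed.

Lemma le_iid_expect n (f g : n.-tuple Cantor -> \bar R) :
  (forall t, 0 <= f t) -> (forall t, f t <= g t) ->
  iid_expect mu f <= iid_expect mu g.
Proof.
elim: n f g => [|n IH] f g f0 fg /=; first exact: fg.
apply: le_nonneg_integral => x; first exact: iid_expect_ge0.
exact: IH.
Qed.

Local Close Scope ereal_scope.
Variables (I : finType) (g : I -> Cantor -> R).
Hypothesis measurable_g : forall i, measurable_fun [set: Cantor] (g i).
Hypothesis g_le1 : forall i x, `|g i x| <= 1.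
Hypothesis g_centered : forall i, (\int[mu]_x (g i x)%:E = 0)%E.

(* Integrating out one sample point at a time: centering kills the cross
   terms, so each point adds the second moment of [g i]. *)
Lemma iid_expect_sum_squares n (c : R) (w a : I -> R) :
  iid_expect mu (fun t : n.-tuple Cantor =>
    (c + \sum_i w i * (a i + \sum_(y <- t) g i y) ^+ 2)%:E) =
  (c + \sum_i w i * (a i ^+ 2 + n%:R * fine (\int[mu]_x (g i x ^+ 2)%:E)))%:E.
Proof.
elim: n c w a => [|n IH] c w a /=.
  by congr (EFin (_ + _)); apply: eq_bigr => i _; rewrite big_nil addr0 mul0r addr0.
set v := fun i => fine (\int[mu]_x (g i x ^+ 2)%:E).
transitivity (\int[mu]_x (c + \sum_i w i * ((a i + g i x) ^+ 2 + n%:R * v i))%:E)%E.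
  apply: eq_integral => x _; rewrite -IH; congr iid_expect; apply: funext => t.
  by congr (EFin (_ + _)); apply: eq_bigr => i _; rewrite big_cons addrA.
transitivity (\int[mu]_x ((c + \sum_i w i * (a i ^+ 2 + n%:R * v i)) +
    \sum_i ((2 * w i * a i) * g i x + w i * g i x ^+ 2))%:E)%E.
  apply: eq_integral => x _; congr EFin; rewrite -addrA; congr (_ + _).
  by rewrite -big_split; apply: eq_bigr => i _ /=; ring.
rewrite integral_centered_quadratic//; congr EFin; rewrite -addrA; congr (_ + _).
by rewrite -big_split; apply: eq_bigr => i _ /=; rewrite /v -natr1; ring.
Qed.

End iid_expectation.

Section means.
Context {R : realType} (mu : probability Cantor R).

Let integrable_bit j : mu.-integrable [set: Cantor] (EFin \o @bit R j).
Proof.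
apply: (@bounded_integrable _ _ _ mu _ 1); first exact: measurable_bit.
by move=> x; rewrite /bit; case: (x j); rewrite ?normr1 ?normr0.
Qed.

Lemma integral_bit j : (\int[mu]_x (bit j x)%:E)%E = (Mean mu j)%:E.
Proof. by rewrite /Mean fineK//; exact: integrable_fin_num (integrable_bit j). Qed.

Lemma Mean_unit_cube : unit_cube (Mean mu).
Proof.
move=> j; apply: fine_integral_unit_interval (measurable_bit j) _ => x.
by rewrite /bit; case: (x j); rewrite ?lexx ?ler01.
Qed.

Lemma measurable_centered_bit j :
  measurable_fun [set: Cantor] (fun x => bit j x - Mean mu j).
Proof. by apply: measurable_funB; [exact: measurable_bit|exact: measurable_cst]. Qed.

Lemma centered_bit_le1 j x : `|bit j x - Mean mu j| <= 1.
Proof.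
have /andP[m0 m1] := Mean_unit_cube j.
by rewrite /bit ler_norml; case: (x j) => /=; apply/andP; split; lra.
Qed.

Lemma integral_centered_bit j : (\int[mu]_x (bit j x - Mean mu j)%:E = 0)%E.
Proof.
under eq_integral do rewrite EFinD.
rewrite integralD//; last 2 first.
- exact: integrable_bit.
- apply: (@bounded_integrable _ _ _ mu _ `|Mean mu j|); first exact: measurable_cst.
  by move=> x; rewrite normrN.
by rewrite integral_bit integral_cst_probability -EFinD subrr.
Qed.

End means.

Lemma exists_separating_coords (R : realType) (cand : nat -> nat -> R) :
  (forall i, unit_cube (cand i)) ->
  exists test : nat -> nat -> nat, forall a b,
    (supdist (cand a) (cand b) <=
     (2 * `|cand a (test a b) - cand b (test a b)|)%:E)%E.
Proof.
move=> cand01; have /choice[t t_sep] : forall ab : nat * nat, exists j,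
    (supdist (cand ab.1) (cand ab.2) <= (2 * `|cand ab.1 j - cand ab.2 j|)%:E)%E.
  by move=> [a b]; exact: exists_coord_supdist_le2.
by exists (fun a b => t (a, b)) => a b; exact: t_sep (a, b).
Qed.

Lemma iid_expect_supdist_min_score_estimate (R : realType)
    (mu : probability Cantor R) (cand : nat -> nat -> R) (test : nat -> nat -> nat)
    m n i0 (eps : R) :
  (forall a b, (supdist (cand a) (cand b) <=
     (2 * `|cand a (test a b) - cand b (test a b)|)%:E)%E) ->
  (forall i, unit_cube (cand i)) ->
  (0 < n)%N -> 0 < eps -> (i0 <= m)%N ->
  (supdist (cand i0) (Mean mu) <= eps%:E)%E ->
  (iid_expect mu (fun S : n.-tuple Cantor =>
     supdist (min_score_estimate cand test m S) (Mean mu)) <=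
   (9 * eps + m.+1%:R ^+ 2 / (n%:R * eps ^+ 2))%:E)%E.
Proof.
move=> test_sep cand01 n0 eps0 i0m i0_close.
pose w (ab : 'I_m.+1 * 'I_m.+1) := ((n%:R * eps) ^+ 2)^-1.
pose g (ab : 'I_m.+1 * 'I_m.+1) x :=
  bit (test_coord test ab) x - Mean mu (test_coord test ab).
have pointwise (S : n.-tuple Cantor) :
    (supdist (min_score_estimate cand test m S) (Mean mu) <=
     (9 * eps + \sum_ab w ab * (0 + \sum_(x <- S) g ab x) ^+ 2)%:E)%E.
  under eq_bigr do rewrite add0r.
  exact: supdist_min_score_estimate_le (Mean_unit_cube mu) i0m i0_close.
apply: le_trans (le_iid_expect mu (fun S => supdist_ge0 _ _) pointwise) _.
rewrite (iid_expect_sum_squares (g := g)); first last.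
- by move=> ab; exact: integral_centered_bit.
- by move=> ab x; exact: centered_bit_le1.
- by move=> ab; exact: measurable_centered_bit.
rewrite lee_fin lerD2l.
apply: (@le_trans _ _ (\sum_(ab : 'I_m.+1 * 'I_m.+1) w ab * n%:R)).
- apply: ler_sum => ab _; rewrite expr0n add0r ler_wpM2l ?invr_ge0 ?sqr_ge0//.
  have g2_01 x : 0 <= g ab x ^+ 2 <= 1.
    by rewrite sqr_ge0 -real_normK ?num_real// expr_le1// centered_bit_le1.
  have /andP[_ g2_le1] := fine_integral_unit_interval mu
    (measurable_funX 2 (measurable_centered_bit mu _)) g2_01.
  by rewrite ler_piMr.
- rewrite /w sumr_const card_prod card_ord -[_ *+ (_ * _)]mulr_natr natrM.
  rewrite le_eqVlt; apply/orP; left; apply/eqP.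
  by field; rewrite pnatr_eq0 -lt0n// gt_eqF.
Qed.

Lemma separable_in_means_candidates (R : realType) (Q : set (probability Cantor R)) :
  separable_in_means Q ->
  exists cand : nat -> nat -> R, (forall i, unit_cube (cand i)) /\
    forall mu, Q mu -> forall eps : R, 0 < eps ->
      exists i, (supdist (cand i) (Mean mu) < eps%:E)%E.
Proof.
move=> sepQ.
have /choice[C CP] : forall k : nat, exists C : set (nat -> R),
    [/\ countable C, C `<=` unit_cube & forall mu, Q mu ->
      exists2 p, C p & (supdist (Mean mu) p < (k.+1%:R^-1)%:E)%E].
  by move=> k; apply: sepQ; rewrite invr_gt0.
have countable_C : countable (\bigcup_k C k).
  by apply: bigcup_countable => // k _; case: (CP k).
have [f f_onto] := elimT (@pcard_surjP (seq_space R) nat _ [set: nat]) countable_C.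
exists (fun i => if `[< unit_cube (f i) >] then f i else cst 0); split.
  by move=> i; case: asboolP => // _ j; rewrite lexx ler01.
move=> mu Qmu eps eps0; pose k := Num.Def.trunc eps^-1.
have k_eps : k.+1%:R^-1 <= eps.
  by rewrite -(invrK eps) lef_pV2 ?posrE ?invr_gt0// ltW// truncnS_gt.
have [_ C_cube C_cover] := CP k; have [p Cp p_close] := C_cover mu Qmu.
have [i _ fi] := f_onto p (ex_intro2 _ _ k I Cp).
exists i; rewrite fi asboolT; last exact: C_cube.
rewrite supdistC.
by apply: lt_le_trans p_close _; rewrite lee_fin.
Qed.

Lemma sqr_div_le_of_pow4_le (R : realType) (eps X N : R) : 0 < eps -> 1 <= X ->
  X ^+ 4 <= N -> eps ^- 3 <= X -> X ^+ 2 / (N * eps ^+ 2) <= eps.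
Proof.
move=> eps0 X1 X4N epsX.
have X0 : 0 < X by apply: lt_le_trans X1.
have N0 : 0 < N by apply: lt_le_trans X4N; rewrite exprn_gt0.
have e3_gt0 : 0 < eps ^+ 3 by rewrite exprn_gt0.
have e3X : 1 <= eps ^+ 3 * X.
  by rewrite -(mulfV (lt0r_neq0 e3_gt0)) ler_wpM2l// ltW.
rewrite ler_pdivrMr ?mulr_gt0 ?exprn_gt0//.
have -> : eps * (N * eps ^+ 2) = eps ^+ 3 * N by ring.
apply: le_trans (ler_wpM2l (ltW e3_gt0) X4N).
have -> : eps ^+ 3 * X ^+ 4 = (eps ^+ 3 * X) * X ^+ 3 by ring.
apply: le_trans (ler_peMl _ e3X); last by rewrite exprn_ge0// ltW.
by rewrite [X ^+ 3]exprSr ler_peMr// exprn_ge0// ltW.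
Qed.

Theorem theorem2 (R : realType) (Q : set (probability Cantor R)) :
  separable_in_means Q -> UME_learnable Q.
Proof.
move=> /separable_in_means_candidates[cand [cand01 cand_dense]].
have [test test_sep] := exists_separating_coords cand01.
exists (fun n => min_score_estimate cand test (iroot4 n).-1); split.
- by move=> n; exact: measurable_min_score_estimate.
- by move=> n S; exact: cand01.
move=> mu Qmu; apply: nonneg_cvge0 => [n|e e0].
  by apply: iid_expect_ge0 => S; exact: supdist_ge0.
pose eps := e / 10; have eps0 : 0 < eps by rewrite divr_gt0.
have [i0 /ltW i0_close] := cand_dense mu Qmu eps eps0.
pose K := maxn i0.+1 (Num.Def.trunc (eps ^- 3)).+1.
exists (K ^ 4)%N => n Kn; have K_le := leq_iroot4 Kn.
have K_gt0 : (0 < K)%N by rewrite leq_max.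
have n_gt0 : (0 < n)%N by apply: leq_trans Kn; rewrite expn_gt0 K_gt0.
have mS : (iroot4 n).-1.+1 = iroot4 n by rewrite prednK// (leq_trans K_gt0).
have i0m : (i0 <= (iroot4 n).-1)%N.
  by rewrite -ltnS mS (leq_trans _ K_le)// leq_maxl.
apply: le_trans (iid_expect_supdist_min_score_estimate
  test_sep cand01 n_gt0 eps0 i0m i0_close) _.
rewrite lee_fin mS.
apply: le_trans (lerD (lexx _) (sqr_div_le_of_pow4_le eps0 _ _ _)) _.
- by rewrite ler1n (leq_trans K_gt0).
- by rewrite -natrX ler_nat; case/andP: (iroot4_spec n).
- apply: le_trans (ltW (truncnS_gt _)) _.
  by rewrite ler_nat (leq_trans _ K_le)// leq_maxr.
- by rewrite /eps; lra.
Qed.
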